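(* Let $p$ be a prime, $G$ a virtually free pro-$p$ group and $F$ an open normal free pro-$p$ subgroup of $G$, and suppose $C_F(t)=1$ for every torsion element $t\in G$. Then any two distinct maximal finite subgroups $A\neq B$ of $G$ satisfy $A\cap B=1$.
   Context: $C_F(t)$ denotes the centralizer of $t$ in $F$. *)

From HB Require Import structures.
From mathcomp Require Import all_boot all_order all_algebra.
From mathcomp Require Import all_classical all_reals all_analysis.
Set Implicit Arguments. Unset Strict Implicit. Unset Printing Implicit Defensive.
Import Order.TTheory GRing.Theory Num.Theory.
Local Open Scope classical_set_scope.

Record TopGroup := {
  tg_car :> topologicalType;
  tg_mul : tg_car -> tg_car -> tg_car;
  tg_inv : tg_car -> tg_car;
  tg_one : tg_car;
  tg_mulA : forall x y z, tg_mul x (tg_mul y z) = tg_mul (tg_mul x y) z;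
  tg_mul1g : forall x, tg_mul tg_one x = x;
  tg_mulVg : forall x, tg_mul (tg_inv x) x = tg_one;
  tg_mul_cont : continuous (fun xy : tg_car * tg_car => tg_mul xy.1 xy.2);
  tg_inv_cont : continuous tg_inv
}.

Arguments tg_mul {t}.
Arguments tg_inv {t}.
Arguments tg_one {t}.

Section Defs.
Variable G : TopGroup.

Fixpoint tg_pow (x : G) (n : nat) : G :=
  match n with 0 => tg_one | n.+1 => tg_mul x (tg_pow x n) end.

Definition is_subgroup (H : set G) : Prop :=
  H tg_one /\ (forall x y, H x -> H y -> H (tg_mul x y)) /\
  (forall x, H x -> H (tg_inv x)).

Definition normal_sub (N H : set G) : Prop :=
  is_subgroup N /\ N `<=` H /\
  forall x n, H x -> N n -> N (tg_mul (tg_mul x n) (tg_inv x)).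

Definition rel_open (H N : set G) : Prop :=
  exists U : set G, open U /\ N = H `&` U.

(** The index [H : N] is finite and a power of p. *)
Definition ppow_index (p : nat) (H N : set G) : Prop :=
  exists (k : nat) (c : G -> 'I_(p ^ k)),
    (forall i, exists x, H x /\ c x = i) /\
    (forall x y, H x -> H y -> (c x = c y <-> N (tg_mul (tg_inv x) y))).

Definition profinite : Prop :=
  compact [set: G] /\ hausdorff_space G /\ totally_disconnected [set: G].

Definition pro_p_sub (p : nat) (H : set G) : Prop :=
  is_subgroup H /\ closed H /\
  forall N, normal_sub N H -> rel_open H N -> ppow_index p H N.

Definition pro_p (p : nat) : Prop := profinite /\ pro_p_sub p [set: G].

Definition conv_to_one (T : Type) (K : TopGroup) (X : set T) (f : T -> K) :=
  forall V : set K, open V -> V tg_one -> finite_set [set x | X x /\ ~ V (f x)].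

Definition hom_on (K : TopGroup) (H : set G) (phi : G -> K) : Prop :=
  forall x y, H x -> H y -> phi (tg_mul x y) = tg_mul (phi x) (phi y).

End Defs.

Arguments tg_pow {G}.

Definition free_pro_p_sub (p : nat) (G : TopGroup) (F : set G) : Prop :=
  pro_p_sub p F /\
  exists X : set G, X `<=` F /\ conv_to_one X (fun x : G => x) /\
   forall (K : TopGroup), pro_p K p -> forall f : G -> K, conv_to_one X f ->
     exists phi : G -> K,
       ({within F, continuous phi} /\ hom_on F phi /\ (forall x, X x -> phi x = f x)) /\
       forall psi : G -> K,
         {within F, continuous psi} -> hom_on F psi -> (forall x, X x -> psi x = f x) ->
         forall x, F x -> psi x = phi x.

Definition virtually_free_pro_p (p : nat) (G : TopGroup) : Prop :=
  pro_p G p /\ exists F : set G, is_subgroup F /\ open F /\ free_pro_p_sub p F.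

Definition torsion (G : TopGroup) (t : G) : Prop :=
  exists n, (0 < n)%N /\ tg_pow t n = tg_one.

Definition centralizer (G : TopGroup) (F : set G) (t : G) : set G :=
  [set x | F x /\ tg_mul x t = tg_mul t x].

Definition finite_subgroup (G : TopGroup) (A : set G) : Prop :=
  is_subgroup A /\ finite_set A.

Definition maximal_finite_subgroup (G : TopGroup) (A : set G) : Prop :=
  finite_subgroup A /\ forall B, finite_subgroup B -> A `<=` B -> B = A.

(** The quotient G/F is a finite p-group and, because C_F(t) = 1 for every
    nontrivial torsion t, every finite subgroup meets F trivially and so embeds
    into G/F.  Suppose A is maximal finite and S is a finite subgroup not
    contained in A with D := A ∩ S nontrivial.  An element of F normalising D
    has a power centralising a nontrivial element of D, hence is trivial, so
    the normaliser N(D) is again finite.  Normalisers grow in finite p-groups,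
    so N(D) contains elements of A and of S outside D: thus N(D) is not
    contained in A and meets A in more than D.  Iterating strictly increases
    the image of A ∩ S in G/F, which is impossible forever; taking S = B
    gives A ∩ B = 1. *)
From Pilot Require Import Defs.
From HB Require Import structures.
From mathcomp Require Import all_boot all_order all_algebra.
From mathcomp Require Import all_classical all_reals all_analysis.
From mathcomp Require Import all_fingroup all_solvable.
From mathcomp Require Import zify.
(* Re-import so that [normal_sub] refers to Defs rather than to fingroup. *)
Import Defs.
Set Implicit Arguments. Unset Strict Implicit. Unset Printing Implicit Defensive.
Local Open Scope classical_set_scope.

Lemma finite_set_pigeonhole (T : Type) (S : set T) (f : nat -> T) :
  finite_set S -> (forall m, S (f m)) -> exists i j, (i < j)%N /\ f i = f j.
Proof.
move=> finS Sf; apply: contrapT => noncollision.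
have injf : {in [set: nat] &, injective f}.
  move=> i j _ _ fij; case: (ltngtP i j) => // [lt|gt].
  - by case: noncollision; exists i, j.
  - by case: noncollision; exists j, i.
apply: infinite_nat; rewrite -(eq_finite_set (inj_card_eq injf)).
by apply: sub_finite_set finS => _ [m _ <-].
Qed.

Lemma finite_set_inj_finType (T : Type) (U : finType) (A : set T) (f : T -> U) :
  {in A &, injective f} -> finite_set A.
Proof.
move=> injf; rewrite -(eq_finite_set (inj_card_eq injf)).
exact: sub_finite_set (subsetT _) finite_finset.
Qed.

Section TopGroupTheory.
Variable G : TopGroup.
Local Notation "x ** y" := (@tg_mul G x y) (at level 40, left associativity).
Local Notation "x ^^-1" := (@tg_inv G x) (at level 3).
Local Notation one := (@tg_one G).

Lemma tg_mulgV (x : G) : x ** x^^-1 = one.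
Proof.
set y := x^^-1.
have -> : x ** y = (y^^-1 ** y) ** (x ** y) by rewrite tg_mulVg tg_mul1g.
by rewrite -tg_mulA (tg_mulA y x y) tg_mulVg tg_mul1g tg_mulVg.
Qed.

Lemma tg_mulg1 (x : G) : x ** one = x.
Proof. by rewrite -(tg_mulVg x) tg_mulA tg_mulgV tg_mul1g. Qed.

Lemma tg_invK (x : G) : (x^^-1)^^-1 = x.
Proof. by rewrite -[LHS]tg_mulg1 -(tg_mulVg x) tg_mulA tg_mulVg tg_mul1g. Qed.

Lemma tg_mulKg (x y : G) : x^^-1 ** (x ** y) = y.
Proof. by rewrite tg_mulA tg_mulVg tg_mul1g. Qed.

Lemma tg_mulKVg (x y : G) : x ** (x^^-1 ** y) = y.
Proof. by rewrite tg_mulA tg_mulgV tg_mul1g. Qed.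

Lemma tg_mulgK (x y : G) : (y ** x) ** x^^-1 = y.
Proof. by rewrite -tg_mulA tg_mulgV tg_mulg1. Qed.

Lemma tg_mulgKV (x y : G) : (y ** x^^-1) ** x = y.
Proof. by rewrite -tg_mulA tg_mulVg tg_mulg1. Qed.

Lemma tg_invM (x y : G) : (x ** y)^^-1 = y^^-1 ** x^^-1.
Proof.
apply: (can_inj (tg_mulKg (x ** y))).
by rewrite tg_mulgV -tg_mulA tg_mulKVg tg_mulgV.
Qed.

Lemma tg_inv1 : one^^-1 = one.
Proof. by rewrite -[LHS]tg_mul1g tg_mulgV. Qed.

Lemma tg_mulIg (x : G) : injective (fun y => y ** x).
Proof. by move=> y z /= yz; rewrite -(tg_mulgK x y) yz tg_mulgK. Qed.

Lemma tg_powD (x : G) m n : tg_pow x (m + n) = tg_pow x m ** tg_pow x n.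
Proof. by elim: m => [|m IHm] /=; rewrite ?tg_mul1g // IHm tg_mulA. Qed.

Lemma tg_torsion_pow_eq (x : G) i j :
  (i < j)%N -> tg_pow x i = tg_pow x j -> torsion x.
Proof.
move=> lt_ij eq_pow; exists (j - i)%N; split; first by rewrite subn_gt0.
apply: (@tg_mulIg (tg_pow x i)) => /=.
by rewrite -tg_powD subnK ?(ltnW lt_ij) // tg_mul1g eq_pow.
Qed.

Section Subgroups.
Variable S : set G.
Hypothesis sS : is_subgroup S.

Lemma subgroup1 : S one.
Proof. by case: sS. Qed.

Lemma subgroupM x y : S x -> S y -> S (x ** y).
Proof. by case: sS => _ [SM _]; exact: SM. Qed.

Lemma subgroupV x : S x -> S (x^^-1).
Proof. by case: sS => _ [_ SV]; exact: SV. Qed.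

Lemma subgroupX x m : S x -> S (tg_pow x m).
Proof. by move=> Sx; elim: m => [|m IHm] /=; [exact: subgroup1 | exact: subgroupM]. Qed.

Lemma finite_subgroup_torsion x : finite_set S -> S x -> torsion x.
Proof.
move=> finS Sx.
have [i [j [lt_ij eq_pow]]] := finite_set_pigeonhole finS (fun m => subgroupX m Sx).
exact: tg_torsion_pow_eq lt_ij eq_pow.
Qed.

End Subgroups.

Lemma subgroupI (A B : set G) :
  is_subgroup A -> is_subgroup B -> is_subgroup (A `&` B).
Proof.
move=> sA sB; split; first by split; exact: subgroup1.
split=> [x y [Ax Bx] [Ay By]|x [Ax Bx]]; split.
- exact: subgroupM.
- exact: subgroupM.
- exact: subgroupV.
- exact: subgroupV.
Qed.

Definition normaliser (D : set G) : set G :=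
  [set x | forall e, D e -> D (x ** e ** x^^-1) /\ D (x^^-1 ** e ** x)].

Lemma normaliser_subgroup (D : set G) : is_subgroup (normaliser D).
Proof.
split; first by move=> e De; rewrite tg_inv1 tg_mulg1 tg_mul1g.
split=> [x y Nx Ny e De|x Nx e De]; last by rewrite tg_invK; have [] := Nx e De.
have [yey _] := Ny e De; have [_ xex] := Nx e De.
have [xyey _] := Nx _ yey; have [_ yxexy] := Ny _ xex.
by split; [move: xyey | move: yxexy]; rewrite tg_invM !tg_mulA.
Qed.

Lemma sub_normaliser (D : set G) : is_subgroup D -> D `<=` normaliser D.
Proof.
move=> sD x Dx e De.
have DM := subgroupM sD; have DV := subgroupV sD.
by split; apply: (DM); [apply: (DM) | apply: (DV) | apply: (DM); [apply: (DV) |] |].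
Qed.

End TopGroupTheory.

Arguments normaliser {G}.

Section PPowerQuotient.
Variables (p : nat) (G : TopGroup) (F : set G) (k : nat) (c : G -> 'I_(p ^ k)).
Local Notation "x ** y" := (@tg_mul G x y) (at level 40, left associativity).
Local Notation "x ^^-1" := (@tg_inv G x) (at level 3).
Local Notation one := (@tg_one G).
Hypothesis p_pr : prime p.
Hypothesis sF : is_subgroup F.
Hypothesis nF : forall x f, F f -> F (x ** f ** x^^-1).
Hypothesis c_surj : forall i, exists x, c x = i.
Hypothesis c_eqP : forall x y, c x = c y <-> F (x^^-1 ** y).

Definition quo_rep i := proj1_sig (cid (c_surj i)).

Lemma quo_repK i : c (quo_rep i) = i.
Proof. exact: proj2_sig (cid (c_surj i)). Qed.

(* G/F, carried by the index type of c. *)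
Definition quo := 'I_(p ^ k).
HB.instance Definition _ := Finite.on quo.
Definition quo_mul (i j : quo) : quo := c (quo_rep i ** quo_rep j).
Definition quo_one : quo := c one.
Definition quo_inv (i : quo) : quo := c ((quo_rep i)^^-1).

Lemma c_mul x y : c (x ** y) = quo_mul (c x) (c y).
Proof.
apply/c_eqP; rewrite /quo_mul.
have /esym/c_eqP := quo_repK (c x); have /esym/c_eqP := quo_repK (c y).
set a := quo_rep (c x); set b := quo_rep (c y).
rewrite -[a](tg_mulKVg x) -[b](tg_mulKVg y) !tg_mulKg.
set f := x^^-1 ** a; set g := y^^-1 ** b => Fg Ff.
have : F ((y^^-1 ** f ** y^^-1^^-1) ** g) by apply: (subgroupM sF) => //; apply: nF.
by rewrite tg_invK tg_invM -!tg_mulA tg_mulKg.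
Qed.

Lemma c_inv x : c (x^^-1) = quo_inv (c x).
Proof.
apply/c_eqP; rewrite /quo_inv.
have /esym/c_eqP := quo_repK (c x); set a := quo_rep (c x).
rewrite -[a](tg_mulKVg x) tg_mulKg; set f := x^^-1 ** a => Ff.
have : F (x ** f^^-1 ** x^^-1) by apply: nF; apply: (subgroupV sF).
by rewrite tg_invK tg_invM -!tg_mulA.
Qed.

Lemma quo_mulA : associative quo_mul.
Proof.
move=> i j l; case: (c_surj i) => x <-; case: (c_surj j) => y <-.
by case: (c_surj l) => z <-; rewrite -!c_mul tg_mulA.
Qed.

Lemma quo_mul1 : left_id quo_one quo_mul.
Proof. by move=> i; case: (c_surj i) => x <-; rewrite -c_mul tg_mul1g. Qed.

Lemma quo_mulV : left_inverse quo_one quo_inv quo_mul.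
Proof. by move=> i; case: (c_surj i) => x <-; rewrite -c_inv -c_mul tg_mulVg. Qed.

HB.instance Definition _ :=
  @Finite_isGroup.Build quo quo_mul quo_one quo_inv quo_mulA quo_mul1 quo_mulV.

Lemma quo_pgroup : pgroup p [set: quo]%SET.
Proof. by rewrite /pgroup cardsT card_ord pnatX pnat_id. Qed.

Lemma c_mulg x y : ((c x : quo) * c y)%g = c (x ** y).
Proof. by rewrite c_mul. Qed.

Lemma c_invg x : ((c x : quo)^-1)%g = c (x^^-1).
Proof. by rewrite c_inv. Qed.

Definition quo_image (S : set G) : {set quo} :=
  [set i : quo | `[< exists x, S x /\ c x = i >]].

Lemma quo_imageP S i : reflect (exists x, S x /\ c x = i) (i \in quo_image S).
Proof. by rewrite inE; apply: asboolP. Qed.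

Lemma quo_image_group S : is_subgroup S -> group_set (quo_image S).
Proof.
move=> sS; apply/group_setP; split.
  by apply/quo_imageP; exists one; split; first exact: (subgroup1 sS).
move=> _ _ /quo_imageP [x [Sx <-]] /quo_imageP [y [Sy <-]]; apply/quo_imageP.
by exists (x ** y); split; [exact: (subgroupM sS) | rewrite c_mulg].
Qed.

Lemma quo_imageS (D S : set G) : D `<=` S -> quo_image D \subset quo_image S.
Proof.
move=> DS; apply/fintype.subsetP => _ /quo_imageP [x [Dx <-]].
by apply/quo_imageP; exists x; split => //; apply: DS.
Qed.

Section TrivialMeet.
Variable S : set G.
Hypothesis sS : is_subgroup S.
Hypothesis S_meet_F : forall x, S x -> F x -> x = one.

Lemma c_inj_on x y : S x -> S y -> c x = c y -> x = y.
Proof.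
move=> Sx Sy /c_eqP Fxy.
have Sxy : S (x^^-1 ** y) by apply: (subgroupM sS) => //; apply: (subgroupV sS).
by rewrite -(tg_mulKVg x y) (S_meet_F Sxy Fxy) tg_mulg1.
Qed.

Lemma trivial_meet_finite : finite_set S.
Proof. by apply: (finite_set_inj_finType (f := c)) => x y; rewrite !in_setE; exact: c_inj_on. Qed.

Lemma quo_image_reflect (D : set G) x :
  D `<=` S -> S x -> c x \in quo_image D -> D x.
Proof.
by move=> DS Sx /quo_imageP [y [Dy cyx]]; rewrite -(c_inj_on (DS _ Dy) Sx cyx).
Qed.

(* Normalisers grow in the finite p-group G/F, into which S embeds. *)
Lemma normaliser_grows (D : set G) :
  is_subgroup D -> D `<=` S -> ~ S `<=` D -> exists s, [/\ S s, ~ D s & normaliser D s].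
Proof.
move=> sD DS nSD.
pose HS := Group (quo_image_group sS); pose HD := Group (quo_image_group sD).
have [x Sx nDx] : exists2 x, S x & ~ D x.
  by apply: contrapT => nex; apply: nSD => x Sx; apply: contrapT => nDx; apply: nex; exists x.
have ltDS : HD \proper HS.
  apply/properP; split; first exact: quo_imageS.
  exists (c x); first by apply/quo_imageP; exists x.
  by apply/negP => /(quo_image_reflect DS Sx).
have pS : pgroup p HS := pgroupS (finset.subsetT _) quo_pgroup.
have /properP [_ [_ /setIP [/quo_imageP [s [Ss <-]] Ns] nDs]] :=
  nilpotent_proper_norm (pgroup_nil pS) ltDS.
exists s; split => //; first by move=> Ds; apply: (negP nDs); apply/quo_imageP; exists s.
move=> e De; have Se := DS _ De.
have conj_in_D y : S y -> ((c e : quo) ^ c y)%g \in HD -> D (y^^-1 ** e ** y).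
  move=> Sy; rewrite conjgE c_invg (c_mulg e) c_mulg tg_mulA; apply: (quo_image_reflect DS).
  by apply: (subgroupM sS) => //; apply: (subgroupM sS) => //; apply: (subgroupV sS).
have eHD : (c e : quo) \in HD by apply/quo_imageP; exists e.
split; last by apply: conj_in_D; rewrite // memJ_norm.
rewrite -[s in s ** e]tg_invK; apply: conj_in_D; first exact: (subgroupV sS).
by rewrite -c_invg memJ_norm ?groupV.
Qed.

End TrivialMeet.

Section TorsionFreeCentralisers.
Hypothesis C_F_trivial :
  forall t : G, torsion t -> t <> one -> centralizer F t = [set one].

Lemma centralizer_trivialP t x :
  torsion t -> t <> one -> F x -> x ** t = t ** x -> x = one.
Proof.
move=> tt nt1 Fx xt; have /seteqP [CF1 _] := C_F_trivial tt nt1.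
exact: CF1.
Qed.

Lemma F_torsion_free z : F z -> torsion z -> z = one.
Proof.
move=> Fz tz; have [//|nz1] := pselect (z = one).
exact: centralizer_trivialP tz nz1 Fz erefl.
Qed.

Lemma finite_subgroup_meet_F S x : finite_subgroup S -> S x -> F x -> x = one.
Proof.
by move=> [sS finS] Sx; move/F_torsion_free; apply; exact: finite_subgroup_torsion Sx.
Qed.

(* If f normalises D then some power u = f^(j-i) fixes the conjugate
   f^i d f^-i, which is torsion and nontrivial; so u = 1 and f is torsion. *)
Lemma normaliser_meet_F D d f : finite_subgroup D -> D d -> d <> one ->
  normaliser D f -> F f -> f = one.
Proof.
move=> [sD finD] Dd nd1 Nf Ff.
pose g m := tg_pow f m ** d ** (tg_pow f m)^^-1.
have Dg m : D (g m).
  elim: m => [|m IHm]; first by rewrite /g /= tg_inv1 tg_mulg1 tg_mul1g.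
  by have [+ _] := Nf _ IHm; rewrite /g /= tg_invM !tg_mulA.
have [i [j [lt_ij eq_g]]] := finite_set_pigeonhole finD Dg.
set u := tg_pow f (j - i).
have pow_j : tg_pow f j = u ** tg_pow f i by rewrite -tg_powD subnK // ltnW.
have gi_nt : g i <> one.
  move=> gi1; apply: nd1.
  have -> : d = (tg_pow f i)^^-1 ** g i ** tg_pow f i.
    by rewrite /g -!tg_mulA tg_mulKg tg_mulVg tg_mulg1.
  by rewrite gi1 tg_mulg1 tg_mulVg.
have u1 : u = one.
  apply: centralizer_trivialP (finite_subgroup_torsion sD finD (Dg i)) gi_nt _ _.
    exact: (subgroupX sF (j - i) Ff).
  by rewrite {2}eq_g /g pow_j tg_invM !tg_mulA tg_mulgKV.
apply: F_torsion_free Ff _; exists (j - i)%N; split; [by rewrite subn_gt0 | exact: u1].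
Qed.

Lemma normaliser_finite D d :
  finite_subgroup D -> D d -> d <> one -> finite_subgroup (normaliser D).
Proof.
move=> finD Dd nd1; have sN := normaliser_subgroup D.
split => //; apply: (trivial_meet_finite sN).
by move=> f Nf Ff; exact: normaliser_meet_F finD Dd nd1 Nf Ff.
Qed.

Lemma maximal_finite_meet_grows A S d :
  maximal_finite_subgroup A -> finite_subgroup S -> ~ S `<=` A ->
  A d -> S d -> d <> one ->
  exists M, [/\ finite_subgroup M, ~ M `<=` A, M d &
                quo_image (A `&` S) \proper quo_image (A `&` M)].
Proof.
move=> [[sA finA] maxA] [sS finS] nSA Ad Sd nd1.
set D := A `&` S; have sD : is_subgroup D := subgroupI sA sS.
have finD : finite_set D by exact: finite_setIl.
have A_meet_F := finite_subgroup_meet_F (conj sA finA).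
have S_meet_F := finite_subgroup_meet_F (conj sS finS).
have DA : D `<=` A by move=> x [].
have DS : D `<=` S by move=> x [].
have nAD : ~ A `<=` D.
  by move=> AD; apply: nSA; rewrite (maxA S (conj sS finS)) // => x /AD[].
have nSD : ~ S `<=` D by move=> SD; apply: nSA => x /SD[].
have [a [Aa nDa Na]] := normaliser_grows sA A_meet_F sD DA nAD.
have [s [Ss nDs Ns]] := normaliser_grows sS S_meet_F sD DS nSD.
have DN : D `<=` normaliser D := sub_normaliser sD.
exists (normaliser D); split.
- exact: normaliser_finite (conj sD finD) (conj Ad Sd) nd1.
- by move=> NA; apply: nDs; split => //; apply: NA.
- exact: DN.
apply/properP; split; first by apply: quo_imageS => x Dx; split; [exact: DA | exact: DN].
exists (c a); first by apply/quo_imageP; exists a.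
by apply/negP => /(quo_image_reflect sA A_meet_F DA Aa).
Qed.

(* Induction on the index of the image of A ∩ S in G/F, which each step shrinks. *)
Lemma maximal_finite_meet_trivial A S :
  maximal_finite_subgroup A -> finite_subgroup S -> ~ S `<=` A -> A `&` S `<=` [set one].
Proof.
move=> maxA; have [n] := ubnP (p ^ k - #|quo_image (A `&` S)|).
elim: n S => // n IHn S lt_n finS nSA d [Ad Sd] /=; apply: contrapT => nd1.
have [M [finM nMA Md ltSM]] := maximal_finite_meet_grows maxA finS nSA Ad Sd nd1.
have le_Mk : (#|quo_image (A `&` M)| <= p ^ k)%N.
  by rewrite -[X in (_ <= X)%N](card_ord (p ^ k)); exact: max_card.
have lt_SM := proper_card ltSM.
by apply: nd1; apply: (IHn M) => //; lia.
Qed.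

End TorsionFreeCentralisers.
End PPowerQuotient.

Theorem mainTheorem6 (p : nat) (G : TopGroup) (F : set G) :
  prime p ->
  virtually_free_pro_p p G ->
  is_subgroup F -> open F -> normal_sub F [set: G] -> free_pro_p_sub p F ->
  (forall t : G, torsion t -> t <> tg_one -> centralizer F t = [set tg_one]) ->
  forall A B : set G, maximal_finite_subgroup A -> maximal_finite_subgroup B ->
  A <> B -> A `&` B = [set tg_one].
Proof.
move=> p_pr [[_ [_ [_ pro_pG]]] _] sF oF nF _ C_F_trivial A B maxA maxB neqAB.
have [k [c [c_surj c_eqP]]] : ppow_index p [set: G] F.
  by apply: (pro_pG F nF); exists F; rewrite setTI.
have [_ [_ nF_conj]] := nF.
have c_onto i : exists x, c x = i by have [x [_ cx]] := c_surj i; exists x.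
have meet_trivial := maximal_finite_meet_trivial p_pr sF
  (fun x f => nF_conj x f I) c_onto (fun x y => c_eqP x y I I) C_F_trivial maxA.
apply/seteqP; split.
  apply: meet_trivial; first exact: maxB.1.
  by move=> BA; apply: neqAB; exact: maxB.2 A maxA.1 BA.
by move=> _ ->; split; [case: maxA => -[sA _] _ | case: maxB => -[sB _] _];
  exact: subgroup1.
Qed.
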